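(* Let $m\ge0$ and $k\ge1$ be integers and $n\ge0$. Then $$\lim_{q\to-1}\frac{\sum_{j=0}^{2n}q^{(2m+1)j}\begin{bmatrix} 2n\\ j\end{bmatrix}_{q^{2k}}}{(-q;q^2)_n}=(2k)^n,\qquad \lim_{q\to-1}\frac{\sum_{j=0}^{2n+1}q^{(2m+1)j}\begin{bmatrix} 2n+1\\ j\end{bmatrix}_{q^{2k}}}{(-q;q^2)_{n+1}}=(2k)^n(2m+1).$$
   Context: $(x;q)_n=\prod_{j=0}^{n-1}(1-q^jx)$. The Gaussian binomial coefficient is $\begin{bmatrix} n\\ j\end{bmatrix}_q=\frac{(q;q)_n}{(q;q)_j(q;q)_{n-j}}$ for $0\le j\le n$, a polynomial in $q$; $\begin{bmatrix} n\\ j\end{bmatrix}_{q^{2k}}$ is this with $q$ replaced by $q^{2k}$. The quotients are rational functions of $q$ and the limits are taken as $q\to-1$. *)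

From Stdlib Require Import Reals.
Open Scope R_scope.

Fixpoint qpoch (x q : R) (n : nat) : R :=
  match n with
  | O => 1
  | S n' => qpoch x q n' * (1 - q ^ n' * x)
  end.

(* Gaussian binomial coefficient [n choose j]_q = (q;q)_n / ((q;q)_j (q;q)_{n-j}),
   taken literally as the quotient (valid whenever the denominator is nonzero,
   in particular for real q with |q| <> 1, i.e. in a punctured neighbourhood of -1). *)
Definition gbinom (q : R) (n j : nat) : R :=
  qpoch q q n / (qpoch q q j * qpoch q q (n - j)).

Definition numer (m k N : nat) (q : R) : R :=
  sum_f_R0 (fun j => q ^ ((2 * m + 1) * j) * gbinom (q ^ (2 * k)) N j) N.

From Stdlib Require Import Reals Lra Lia.
Open Scope R_scope.

(* The numerator is the Rogers–Szegő polynomial H_N(z) = sum_j z^j [N,j]_Q at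
   Q = q^(2k), z = q^(2m+1), and it satisfies the three-term recurrence
   H_(N+2) = (1 + z) H_(N+1) - z (1 - Q^(N+1)) H_N.  As q -> -1 both coefficients
   1 + z and 1 - Q^(N+1) vanish to first order in 1 + q, so H_(2n) and H_(2n+1)
   are divisible by (1 + q)^n and (1 + q)^(n+1); the same is true of (-q;q^2)_n.
   Dividing these factors out leaves polynomials in q whose values at q = -1
   follow from the recurrence: (2k)^n (2n-1)!!, (2k)^n (2m+1) (2n+1)!! and
   (2n-1)!! respectively. *)

Lemma Rabs_pow_neq_1 (x : R) (n : nat) :
  Rabs x <> 1 -> (0 < n)%nat -> Rabs (x ^ n) <> 1.
Proof.
  intros Hx Hn E; rewrite <- RPow_abs in E.
  destruct (pow_R1 _ _ E) as [E' | ->]; [| lia].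
  rewrite Rabs_Rabsolu in E'; contradiction.
Qed.

Lemma qpoch_neq0 (x q : R) (n : nat) :
  (forall j, (j < n)%nat -> q ^ j * x <> 1) -> qpoch x q n <> 0.
Proof.
  induction n as [| n IHn]; intros Hx; cbn [qpoch]; [lra |].
  apply Rmult_integral_contrapositive_currified.
  - apply IHn; intros j Hj; apply Hx; lia.
  - specialize (Hx n (Nat.lt_succ_diag_r n)); lra.
Qed.

Section RogersSzego.

Variable Q : R.
Hypothesis qpoch_Q_neq0 : forall n, qpoch Q Q n <> 0.

Lemma qpoch_diag_succ (n : nat) : qpoch Q Q (S n) = qpoch Q Q n * (1 - Q ^ S n).
Proof. simpl; ring. Qed.

Lemma qpochS_factor_neq0 (n : nat) : 1 - Q ^ S n <> 0.
Proof.
  intro E; apply (qpoch_Q_neq0 (S n)).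
  rewrite qpoch_diag_succ, E; ring.
Qed.

Lemma gbinom_n0 (n : nat) : gbinom Q n 0 = 1.
Proof.
  unfold gbinom; rewrite Nat.sub_0_r; simpl.
  field; apply qpoch_Q_neq0.
Qed.

Lemma gbinom_nn (n : nat) : gbinom Q n n = 1.
Proof.
  unfold gbinom; rewrite Nat.sub_diag; simpl.
  field; apply qpoch_Q_neq0.
Qed.

Lemma gbinom_pascal (n j : nat) : (j <= n)%nat ->
  gbinom Q (S (S n)) (S j) = gbinom Q (S n) j + Q ^ S j * gbinom Q (S n) (S j).
Proof.
  intro Hj; unfold gbinom.
  replace (S (S n) - S j)%nat with (S (n - j)) by lia.
  replace (S n - j)%nat with (S (n - j)) by lia.
  replace (S n - S j)%nat with (n - j)%nat by lia.
  rewrite (qpoch_diag_succ (S n)), (qpoch_diag_succ j), (qpoch_diag_succ (n - j)).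
  replace (Q ^ S (S n)) with (Q ^ S j * Q ^ S (n - j))
    by (rewrite <- pow_add; f_equal; lia).
  pose proof (qpoch_Q_neq0 (S n)); pose proof (qpoch_Q_neq0 j);
    pose proof (qpoch_Q_neq0 (n - j)).
  pose proof (qpochS_factor_neq0 j); pose proof (qpochS_factor_neq0 (n - j)).
  field; repeat split; assumption.
Qed.

Lemma gbinom_absorb (n j : nat) : (j <= n)%nat ->
  (1 - Q ^ S j) * gbinom Q (S n) (S j) = (1 - Q ^ S n) * gbinom Q n j.
Proof.
  intro Hj; unfold gbinom.
  replace (S n - S j)%nat with (n - j)%nat by lia.
  rewrite (qpoch_diag_succ n), (qpoch_diag_succ j).
  pose proof (qpoch_Q_neq0 n); pose proof (qpoch_Q_neq0 j);
    pose proof (qpoch_Q_neq0 (n - j)); pose proof (qpochS_factor_neq0 j).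
  field; repeat split; assumption.
Qed.

Definition rogers_szego (z : R) (n : nat) : R :=
  sum_f_R0 (fun j => z ^ j * gbinom Q n j) n.

Lemma rogers_szego_rec (z : R) (n : nat) :
  rogers_szego z (S (S n)) =
  (1 + z) * rogers_szego z (S n) - z * (1 - Q ^ S n) * rogers_szego z n.
Proof.
  set (S1 := sum_f_R0 (fun j => z ^ j * gbinom Q (S n) j) n).
  set (S2 := sum_f_R0 (fun j => z ^ S j * gbinom Q (S n) (S j)) n).
  set (S3 := sum_f_R0 (fun j => z ^ S j * Q ^ S j * gbinom Q (S n) (S j)) n).
  assert (first_terms : rogers_szego z (S n) = S1 + z ^ S n).
  { unfold rogers_szego, S1; rewrite tech5, gbinom_nn; ring. }
  assert (last_terms : rogers_szego z (S n) = 1 + S2).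
  { unfold rogers_szego, S2; rewrite decomp_sum, gbinom_n0 by lia; simpl; ring. }
  assert (pascal : rogers_szego z (S (S n)) = 1 + z * S1 + S3 + z ^ S (S n)).
  { unfold rogers_szego; rewrite decomp_sum by lia; simpl pred.
    rewrite tech5; cbv beta; rewrite gbinom_n0, gbinom_nn.
    unfold S1, S3; rewrite scal_sum.
    rewrite (sum_eq _ (fun j => z ^ j * gbinom Q (S n) j * z
                                + z ^ S j * Q ^ S j * gbinom Q (S n) (S j))).
    - rewrite plus_sum; simpl; ring.
    - intros j Hj; rewrite gbinom_pascal by exact Hj; simpl; ring. }
  assert (absorb : S2 - S3 = z * (1 - Q ^ S n) * rogers_szego z n).
  { unfold S2, S3, rogers_szego; rewrite <- minus_sum, scal_sum.
    apply sum_eq; intros j Hj.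
    transitivity (z ^ S j * ((1 - Q ^ S j) * gbinom Q (S n) (S j))); [ring |].
    rewrite gbinom_absorb by exact Hj; simpl; ring. }
  rewrite <- absorb, pascal.
  replace ((1 + z) * rogers_szego z (S n))
    with (rogers_szego z (S n) + z * rogers_szego z (S n)) by ring.
  rewrite last_terms at 1; rewrite first_terms; simpl; ring.
Qed.

End RogersSzego.

Fixpoint geom (x : R) (n : nat) : R :=
  match n with
  | O => 0
  | S n' => geom x n' + x ^ n'
  end.

Lemma geom_mul (x : R) (n : nat) : (1 - x) * geom x n = 1 - x ^ n.
Proof.
  induction n as [| n IHn]; simpl; [ring |].
  rewrite Rmult_plus_distr_l, IHn; ring.
Qed.

Lemma geom_1 (n : nat) : geom 1 n = INR n.
Proof.
  induction n as [| n IHn]; simpl geom; [reflexivity |].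
  rewrite IHn, pow1, S_INR; ring.
Qed.

Lemma pow_opp_odd (q : R) (j : nat) : (- q) ^ (2 * j + 1) = - q ^ (2 * j + 1).
Proof.
  rewrite !pow_add, !pow_mult.
  replace ((- q) ^ 2) with (q ^ 2) by ring; ring.
Qed.

Definition odd_pow_quo (m : nat) (q : R) : R := geom (- q) (2 * m + 1).

Lemma odd_pow_quoE (m : nat) (q : R) :
  1 + q ^ (2 * m + 1) = (1 + q) * odd_pow_quo m q.
Proof.
  unfold odd_pow_quo; replace (1 + q) with (1 - - q) by ring.
  rewrite geom_mul, pow_opp_odd; ring.
Qed.

Lemma odd_pow_quo_m1 (m : nat) : odd_pow_quo m (-1) = INR (2 * m + 1).
Proof. unfold odd_pow_quo; replace (- -1) with 1 by ring; apply geom_1. Qed.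

Definition even_pow_quo (k N : nat) (q : R) : R := (1 - q) * geom (q ^ 2) (k * N).

Lemma even_pow_quoE (k N : nat) (q : R) :
  1 - (q ^ (2 * k)) ^ N = (1 + q) * even_pow_quo k N q.
Proof.
  unfold even_pow_quo; rewrite pow_mult, <- pow_mult.
  transitivity ((1 - q ^ 2) * geom (q ^ 2) (k * N)); [rewrite geom_mul | ]; ring.
Qed.

Lemma even_pow_quo_m1 (k N : nat) : even_pow_quo k N (-1) = 2 * INR (k * N).
Proof.
  unfold even_pow_quo; replace ((-1) ^ 2) with 1 by ring.
  rewrite geom_1; ring.
Qed.

Lemma qpoch_pow_neq0 (q : R) (k n : nat) :
  (1 <= k)%nat -> Rabs q <> 1 -> qpoch (q ^ (2 * k)) (q ^ (2 * k)) n <> 0.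
Proof.
  intros hk Hq; apply qpoch_neq0; intros j _ E.
  apply (Rabs_pow_neq_1 q (2 * k * S j) Hq); [lia |].
  rewrite pow_mult, <- tech_pow_Rmult, Rmult_comm, E; apply Rabs_R1.
Qed.

Lemma qpoch_opp_sq_neq0 (q : R) (n : nat) :
  Rabs q <> 1 -> qpoch (- q) (q ^ 2) n <> 0.
Proof.
  intro Hq; apply qpoch_neq0; intros j _ E.
  apply (Rabs_pow_neq_1 q (2 * j + 1) Hq); [lia |].
  replace (q ^ (2 * j + 1)) with (- ((q ^ 2) ^ j * - q))
    by (rewrite pow_add, pow_mult; ring).
  rewrite E, Rabs_Ropp; apply Rabs_R1.
Qed.

Fixpoint qpoch_quo (n : nat) (q : R) : R :=
  match n with
  | O => 1
  | S n' => qpoch_quo n' q * odd_pow_quo n' q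
  end.

Lemma qpoch_quoE (n : nat) (q : R) : qpoch (- q) (q ^ 2) n = (1 + q) ^ n * qpoch_quo n q.
Proof.
  induction n as [| n IHn]; cbn [qpoch qpoch_quo]; [ring |].
  replace (1 - (q ^ 2) ^ n * - q) with (1 + q ^ (2 * n + 1))
    by (rewrite pow_add, pow_mult; ring).
  rewrite IHn, odd_pow_quoE; simpl; ring.
Qed.

Lemma qpoch_quo_m1_pos (n : nat) : 0 < qpoch_quo n (-1).
Proof.
  induction n as [| n IHn]; cbn [qpoch_quo]; [lra |].
  rewrite odd_pow_quo_m1; apply Rmult_lt_0_compat; [exact IHn |].
  apply lt_0_INR; lia.
Qed.

(* [rs_quo m k n q] is the pair (H_(2n), H_(2n+1)) divided by (1 + q)^n and
   (1 + q)^(n+1): the recurrence with the factors 1 + z = (1 + q) odd_pow_quo and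
   1 - Q^N = (1 + q) even_pow_quo cancelled. *)
Fixpoint rs_quo (m k n : nat) (q : R) : R * R :=
  match n with
  | O => (1, odd_pow_quo m q)
  | S n' =>
      let e := fst (rs_quo m k n' q) in
      let o := snd (rs_quo m k n' q) in
      let e' := (1 + q) * odd_pow_quo m q * o
                - q ^ (2 * m + 1) * even_pow_quo k (2 * n' + 1) q * e in
      (e', odd_pow_quo m q * e' - q ^ (2 * m + 1) * even_pow_quo k (2 * n' + 2) q * o)
  end.

Lemma numer_rogers_szego (m k N : nat) (q : R) :
  numer m k N q = rogers_szego (q ^ (2 * k)) (q ^ (2 * m + 1)) N.
Proof. apply sum_eq; intros j _; rewrite pow_mult; reflexivity. Qed.

Lemma numer_rs_quo (m k n : nat) (q : R) : (1 <= k)%nat -> Rabs q <> 1 ->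
  numer m k (2 * n) q = (1 + q) ^ n * fst (rs_quo m k n q) /\
  numer m k (2 * n + 1) q = (1 + q) ^ (n + 1) * snd (rs_quo m k n q).
Proof.
  intros hk Hq; pose proof (fun n => qpoch_pow_neq0 q k n hk Hq) as Hpoch.
  rewrite !numer_rogers_szego.
  set (Q := q ^ (2 * k)); set (z := q ^ (2 * m + 1)).
  induction n as [| n [IHe IHo]].
  - unfold rogers_szego; simpl; rewrite !gbinom_n0, gbinom_nn by auto.
    split; [ring |].
    transitivity (1 + z); [ring | unfold z; rewrite odd_pow_quoE; ring].
  - replace (2 * n + 1)%nat with (S (2 * n)) in IHo by lia.
    replace (2 * S n + 1)%nat with (S (S (S (2 * n)))) by lia.
    replace (2 * S n)%nat with (S (S (2 * n))) by lia.
    assert (even : rogers_szego Q z (S (S (2 * n)))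
                   = (1 + q) ^ S n * fst (rs_quo m k (S n) q)).
    { rewrite rogers_szego_rec, IHe, IHo by auto; cbn [rs_quo fst snd].
      unfold z; rewrite odd_pow_quoE; unfold Q; rewrite even_pow_quoE.
      replace (2 * n + 1)%nat with (S (2 * n)) by lia.
      replace (n + 1)%nat with (S n) by lia; simpl pow; ring. }
    split; [exact even |].
    rewrite rogers_szego_rec, even, IHo by auto; cbn [rs_quo fst snd].
    unfold z; rewrite odd_pow_quoE; unfold Q; rewrite even_pow_quoE.
    replace (2 * n + 2)%nat with (S (S (2 * n))) by lia.
    replace (2 * n + 1)%nat with (S (2 * n)) by lia.
    replace (S n + 1)%nat with (S (S n)) by lia.
    replace (n + 1)%nat with (S n) by lia; simpl pow; ring.
Qed.

Lemma rs_quo_m1 (m k n : nat) :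
  fst (rs_quo m k n (-1)) = INR (2 * k) ^ n * qpoch_quo n (-1) /\
  snd (rs_quo m k n (-1)) = INR (2 * k) ^ n * INR (2 * m + 1) * qpoch_quo (S n) (-1).
Proof.
  assert (z_m1 : (-1) ^ (2 * m + 1) = -1).
  { rewrite pow_add, pow_1_even; ring. }
  induction n as [| n [IHe IHo]]; cbn [rs_quo fst snd qpoch_quo].
  - rewrite !odd_pow_quo_m1; simpl (INR (2 * 0 + 1)); split; simpl pow; ring.
  - rewrite IHe, IHo; cbn [qpoch_quo].
    rewrite z_m1, !odd_pow_quo_m1, !even_pow_quo_m1.
    replace (2 * n + 2)%nat with (2 * n + 1 + 1)%nat by lia.
    replace (2 * S n + 1)%nat with (2 * n + 1 + 1 + 1)%nat by lia.
    repeat rewrite ?plus_INR, ?mult_INR; rewrite INR_1; simpl (INR 2).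
    split; simpl pow; ring.
Qed.

Lemma continuity_pt_plus_fun (f g : R -> R) (x : R) :
  continuity_pt f x -> continuity_pt g x -> continuity_pt (fun y => f y + g y) x.
Proof. exact (continuity_pt_plus f g x). Qed.

Lemma continuity_pt_minus_fun (f g : R -> R) (x : R) :
  continuity_pt f x -> continuity_pt g x -> continuity_pt (fun y => f y - g y) x.
Proof. exact (continuity_pt_minus f g x). Qed.

Lemma continuity_pt_mult_fun (f g : R -> R) (x : R) :
  continuity_pt f x -> continuity_pt g x -> continuity_pt (fun y => f y * g y) x.
Proof. exact (continuity_pt_mult f g x). Qed.

Lemma continuity_pt_opp_fun (f : R -> R) (x : R) :
  continuity_pt f x -> continuity_pt (fun y => - f y) x.
Proof. exact (continuity_pt_opp f x). Qed.

Lemma continuity_pt_cst_fun (c x : R) : continuity_pt (fun _ => c) x.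
Proof. apply continuity_pt_const; intros a b; reflexivity. Qed.

Lemma continuity_pt_id_fun (x : R) : continuity_pt (fun y => y) x.
Proof. exact (derivable_continuous_pt _ x (derivable_pt_id x)). Qed.

Lemma continuity_pt_pow_fun (f : R -> R) (n : nat) (x : R) :
  continuity_pt f x -> continuity_pt (fun y => f y ^ n) x.
Proof.
  intro Hf; induction n as [| n IHn]; cbn [pow].
  - apply continuity_pt_cst_fun.
  - apply continuity_pt_mult_fun; assumption.
Qed.

Lemma continuity_pt_geom (f : R -> R) (n : nat) (x : R) :
  continuity_pt f x -> continuity_pt (fun y => geom (f y) n) x.
Proof.
  intro Hf; induction n as [| n IHn]; cbn [geom].
  - apply continuity_pt_cst_fun.
  - apply continuity_pt_plus_fun; [| apply continuity_pt_pow_fun]; assumption.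
Qed.

Create HintDb polynomial.
#[local] Hint Resolve continuity_pt_plus_fun continuity_pt_minus_fun
  continuity_pt_mult_fun continuity_pt_opp_fun continuity_pt_cst_fun
  continuity_pt_id_fun continuity_pt_pow_fun continuity_pt_geom : polynomial.

Lemma continuity_pt_odd_pow_quo (m : nat) (x : R) : continuity_pt (odd_pow_quo m) x.
Proof. unfold odd_pow_quo; auto with polynomial. Qed.

Lemma continuity_pt_even_pow_quo (k N : nat) (x : R) : continuity_pt (even_pow_quo k N) x.
Proof. unfold even_pow_quo; auto with polynomial. Qed.

#[local] Hint Resolve continuity_pt_odd_pow_quo continuity_pt_even_pow_quo : polynomial.

Lemma continuity_pt_qpoch_quo (n : nat) (x : R) : continuity_pt (qpoch_quo n) x.
Proof. induction n as [| n IHn]; cbn [qpoch_quo]; auto with polynomial. Qed.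

Lemma continuity_pt_rs_quo (m k n : nat) (x : R) :
  continuity_pt (fun q => fst (rs_quo m k n q)) x /\
  continuity_pt (fun q => snd (rs_quo m k n q)) x.
Proof.
  induction n as [| n [IHe IHo]]; cbn [rs_quo fst snd]; split; auto 10 with polynomial.
Qed.

Lemma limit1_in_continuity_pt_eq (f h : R -> R) (a d : R) :
  0 < d -> continuity_pt h a ->
  (forall x, x <> a -> Rabs (x - a) < d -> f x = h x) ->
  limit1_in f (fun x => x <> a) (h a) a.
Proof.
  intros Hd Hh Hfh eps Heps.
  destruct (Hh eps Heps) as [alpha [Halpha Hclose]].
  exists (Rmin alpha d); split; [apply Rmin_pos; assumption |].
  intros x [Hx Hxa]; simpl in Hxa; unfold Rdist in Hxa.
  rewrite Hfh; [| exact Hx | eapply Rlt_le_trans; [exact Hxa | apply Rmin_r]].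
  apply Hclose; split.
  - split; [exact I | auto].
  - eapply Rlt_le_trans; [exact Hxa | apply Rmin_l].
Qed.

Lemma numer_div_qpoch_rs_quo (m k n : nat) (q : R) : (1 <= k)%nat ->
  q <> -1 -> Rabs (q - -1) < 1 ->
  numer m k (2 * n) q / qpoch (- q) (q ^ 2) n
    = fst (rs_quo m k n q) / qpoch_quo n q /\
  numer m k (2 * n + 1) q / qpoch (- q) (q ^ 2) (n + 1)
    = snd (rs_quo m k n q) / qpoch_quo (S n) q.
Proof.
  intros hk Hq Hd.
  assert (Habs : Rabs q <> 1).
  { apply Rabs_def2 in Hd; destruct Hd as [Hd1 Hd2].
    unfold Rabs; destruct (Rcase_abs q); lra. }
  assert (Hpow : forall j, (1 + q) ^ j <> 0) by (intro j; apply pow_nonzero; lra).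
  assert (Hquo : forall j, qpoch_quo j q <> 0).
  { intros j E; apply (qpoch_opp_sq_neq0 q j Habs); rewrite qpoch_quoE, E; ring. }
  destruct (numer_rs_quo m k n q hk Habs) as [-> ->].
  rewrite !qpoch_quoE; replace (n + 1)%nat with (S n) by lia.
  split; field; split; auto.
Qed.

Theorem corollary2p4 (m k n : nat) (hk : (1 <= k)%nat) :
  limit1_in (fun q => numer m k (2 * n) q / qpoch (- q) (q ^ 2) n)
            (fun q => q <> -1) (INR (2 * k) ^ n) (-1)
  /\
  limit1_in (fun q => numer m k (2 * n + 1) q / qpoch (- q) (q ^ 2) (n + 1))
            (fun q => q <> -1) (INR (2 * k) ^ n * INR (2 * m + 1)) (-1).
Proof.
  pose proof (qpoch_quo_m1_pos n); pose proof (qpoch_quo_m1_pos (S n)).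
  destruct (rs_quo_m1 m k n) as [even_m1 odd_m1].
  destruct (continuity_pt_rs_quo m k n (-1)) as [even_cont odd_cont].
  split.
  - replace (INR (2 * k) ^ n) with (fst (rs_quo m k n (-1)) / qpoch_quo n (-1))
      by (rewrite even_m1; field; lra).
    apply (limit1_in_continuity_pt_eq _
             (fun q => fst (rs_quo m k n q) / qpoch_quo n q) _ 1); [lra | |].
    + apply continuity_pt_div; [exact even_cont | apply continuity_pt_qpoch_quo | lra].
    + intros q Hq Hd; apply (numer_div_qpoch_rs_quo m k n q hk Hq Hd).
  - replace (INR (2 * k) ^ n * INR (2 * m + 1))
      with (snd (rs_quo m k n (-1)) / qpoch_quo (S n) (-1))
      by (rewrite odd_m1; field; lra).
    apply (limit1_in_continuity_pt_eq _
             (fun q => snd (rs_quo m k n q) / qpoch_quo (S n) q) _ 1); [lra | |].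
    + apply continuity_pt_div; [exact odd_cont | apply continuity_pt_qpoch_quo | lra].
    + intros q Hq Hd; apply (numer_div_qpoch_rs_quo m k n q hk Hq Hd).
Qed.
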